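(* Let $\nu\in\mathbb{S}^{2n}$, $d\in\mathbb{R}$, $\Pi^+_{\nu,d}=\{\xi\in\mathbb{R}^{2n+1}:\langle\xi,\nu\rangle>d\}$, $p\ge2$ (in fact any $p>1$) and $1\le i\le n$. Then for every real-valued $u\in C_0^\infty(\Pi^+_{\nu,d})$, \[ \Bigl(\frac{p-1}{p}\Bigr)^p\int_{\Pi^+_{\nu,d}}\frac{|\langle X_i(\xi),\nu\rangle|^p}{\operatorname{dist}(\xi,\partial\Pi^+_{\nu,d})^p}|u|^p\,d\xi\le\int_{\Pi^+_{\nu,d}}|X_iu|^p\,d\xi, \] and the same inequality holds with $X_i$ replaced by $Y_i$ on both sides.
   Context: Points of $\mathbb{R}^{2n+1}$ are written $\xi=(x,y,t)$, $x,y\in\mathbb{R}^n$, $t\in\mathbb{R}$. For $1\le i\le n$, $X_i=\partial_{x_i}+2y_i\partial_t$ and $Y_i=\partial_{y_i}-2x_i\partial_t$ (the left-invariant horizontal vector fields of the Heisenberg group $\mathbb{H}^n$), identified with their coefficient vectors in $\mathbb{R}^{2n+1}$; $\langle\cdot,\cdot\rangle$ is the Euclidean inner product, $\mathbb{S}^{2n}$ the Euclidean unit sphere, $\operatorname{dist}$ the Euclidean distance. *)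

(* Points of R^N are encoded as (nat -> R),
   only coordinates 0..N-1 being meaningful. For R^{2n+1}:
   x_j = coord (j-1), y_j = coord (n+j-1), t = coord 2n   (j = 1..n). *)
From Stdlib Require Import Reals Lra Classical ClassicalEpsilon.
Open Scope R_scope.

Fixpoint sumN (N : nat) (f : nat -> R) : R :=
  match N with O => 0 | S m => sumN m f + f m end.

Definition dotN (N : nat) (a b : nat -> R) : R := sumN N (fun k => a k * b k).

Definition eucl_dist (N : nat) (a b : nat -> R) : R :=
  sqrt (sumN N (fun k => (a k - b k) ^ 2)).

(* |x|^p with the convention 0^p = 0 (p > 0) *)
Definition powa (x p : R) : R :=
  if Req_dec_T x 0 then 0 else Rpower (Rabs x) p.

Definition upd (xi : nat -> R) (k : nat) (s : R) : nat -> R :=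
  fun j => if Nat.eq_dec j k then s else xi j.

Definition pder (k : nat) (u : (nat -> R) -> R) (xi : nat -> R) (l : R) : Prop :=
  derivable_pt_lim (fun s => u (upd xi k s)) (xi k) l.

(* the k-th partial derivative (0 where it does not exist) *)
Definition pd (k : nat) (u : (nat -> R) -> R) (xi : nat -> R) : R :=
  match excluded_middle_informative (exists l, pder k u xi l) with
  | left H => proj1_sig (constructive_indefinite_description _ H)
  | right _ => 0
  end.

(* u is a function on R^N: it only depends on the first N coordinates *)
Definition depends_only (N : nat) (u : (nat -> R) -> R) : Prop :=
  forall xi eta, (forall k, (k < N)%nat -> xi k = eta k) -> u xi = u eta.

Definition contN (N : nat) (u : (nat -> R) -> R) : Prop :=
  forall xi eps, 0 < eps -> exists del, 0 < del /\
    forall eta, (forall k, (k < N)%nat -> Rabs (eta k - xi k) < del) ->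
      Rabs (u eta - u xi) < eps.

Fixpoint CkN (m N : nat) (u : (nat -> R) -> R) : Prop :=
  contN N u /\
  match m with
  | O => True
  | S m' => forall k, (k < N)%nat ->
      (forall xi, exists l, pder k u xi l) /\ CkN m' N (pd k u)
  end.

Definition smoothN (N : nat) (u : (nat -> R) -> R) : Prop := forall m, CkN m N u.

Definition closedN (N : nat) (K : (nat -> R) -> Prop) : Prop :=
  forall xi, (forall eps, 0 < eps -> exists eta, K eta /\
                 forall k, (k < N)%nat -> Rabs (eta k - xi k) < eps) -> K xi.

Definition boundedN (N : nat) (K : (nat -> R) -> Prop) : Prop :=
  exists R0, forall xi, K xi -> forall k, (k < N)%nat -> Rabs (xi k) <= R0.

Definition compact_support_in (N : nat) (u : (nat -> R) -> R) (O : (nat -> R) -> Prop) : Prop :=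
  exists K, closedN N K /\ boundedN N K /\ (forall xi, K xi -> O xi) /\
    (forall xi, u xi <> 0 -> K xi).

(* Riemann integral on [a,b], 0 if not integrable (value independent of the proof) *)
Definition RInt (f : R -> R) (a b : R) : R :=
  match excluded_middle_informative (exists pr : Riemann_integrable f a b, True) with
  | left H => RiemannInt (proj1_sig (constructive_indefinite_description _ H))
  | right _ => 0
  end.

Fixpoint intCube (N : nat) (M : R) (f : (nat -> R) -> R) : R :=
  match N with
  | O => f (fun _ => 0)
  | S m => RInt (fun s => intCube m M (fun xi => f (upd xi m s))) (- M) M
  end.

Definition integralRN (N : nat) (f : (nat -> R) -> R) : R :=
  match excluded_middle_informative
          (exists l, Un_cv (fun m => intCube N (INR m) f) l) with
  | left H => proj1_sig (constructive_indefinite_description _ H)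
  | right _ => 0
  end.

Definition integral_on (N : nat) (O : (nat -> R) -> Prop) (f : (nat -> R) -> R) : R :=
  integralRN N (fun xi => if excluded_middle_informative (O xi) then f xi else 0).

(* infimum of a set of reals (0 if none) *)
Definition is_glb (E : R -> Prop) (m : R) : Prop :=
  (forall x, E x -> m <= x) /\ (forall b, (forall x, E x -> b <= x) -> b <= m).

Definition Rinf (E : R -> Prop) : R :=
  match excluded_middle_informative (exists m, is_glb E m) with
  | left H => proj1_sig (constructive_indefinite_description _ H)
  | right _ => 0
  end.

Definition distN (N : nat) (xi : nat -> R) (S : (nat -> R) -> Prop) : R :=
  Rinf (fun r => exists eta, S eta /\ r = eucl_dist N xi eta).

Definition halfspace (N : nat) (nu : nat -> R) (d : R) (xi : nat -> R) : Prop :=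
  d < dotN N xi nu.
Definition hyperplane (N : nat) (nu : nat -> R) (d : R) (xi : nat -> R) : Prop :=
  dotN N xi nu = d.

(* Heisenberg vector fields on R^{2n+1}, as coefficient vectors (1 <= i <= n) *)
Definition Xvec (n i : nat) (xi : nat -> R) : nat -> R :=
  fun k => if Nat.eq_dec k (i - 1) then 1
           else if Nat.eq_dec k (2 * n) then 2 * xi (n + (i - 1))%nat else 0.
Definition Yvec (n i : nat) (xi : nat -> R) : nat -> R :=
  fun k => if Nat.eq_dec k (n + (i - 1)) then 1
           else if Nat.eq_dec k (2 * n) then - 2 * xi (i - 1)%nat else 0.

Definition vf_apply (N : nat) (V : (nat -> R) -> nat -> R) (u : (nat -> R) -> R)
  (xi : nat -> R) : R := sumN N (fun k => V xi k * pd k u xi).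

(* Let delta = <xi, nu> - d, the distance to the boundary of the half-space, and let V be
   X_i or Y_i, so that V = d/dx_j1 + kap x_m0 d/dx_j2 with m0 distinct from j1, j2.  Then
   V is divergence free, V delta = a := <V, nu>, and V a = 0.  Integrating
   V(|a|^(p-2) a delta^(1-p) |u|^p) over space gives
     (p - 1) Int |a|^p delta^(-p) |u|^p = p Int |a|^(p-2) a delta^(1-p) |u|^(p-2) u Vu,
   and Young's inequality applied to the right-hand side yields the Hardy inequality.
   Integrals are iterated Riemann integrals over a cube containing the support, so the
   divergence identity reduces to the fundamental theorem of calculus in one variable;
   the compactness arguments (uniform continuity, positive distance from the support to
   the boundary) go through Cousin's lemma on boxes. *)

From Pilot Require Import Defs.
From Stdlib Require Import Reals Lra Lia Classical ClassicalEpsilon FunctionalExtensionality.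
From Coquelicot Require Import Coquelicot.
Open Scope R_scope.

Lemma upd_same (x : nat -> R) k s : upd x k s k = s.
Proof. unfold upd. destruct (Nat.eq_dec k k); [reflexivity|congruence]. Qed.

Lemma upd_other (x : nat -> R) k s j : j <> k -> upd x k s j = x j.
Proof. intros H. unfold upd. destruct (Nat.eq_dec j k); [congruence|reflexivity]. Qed.

Lemma upd_upd_same (x : nat -> R) k s t : upd (upd x k t) k s = upd x k s.
Proof.
  apply functional_extensionality; intro j. unfold upd.
  destruct (Nat.eq_dec j k); reflexivity.
Qed.

Lemma upd_comm (x : nat -> R) j k s t : j <> k ->
  upd (upd x j s) k t = upd (upd x k t) j s.
Proof.
  intros H. apply functional_extensionality; intro m. unfold upd.
  destruct (Nat.eq_dec m k), (Nat.eq_dec m j); subst; congruence.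
Qed.

Lemma upd_id (x : nat -> R) k : upd x k (x k) = x.
Proof.
  apply functional_extensionality; intro m. unfold upd.
  destruct (Nat.eq_dec m k); subst; reflexivity.
Qed.

Lemma sumN_ext N f g : (forall k, (k < N)%nat -> f k = g k) -> sumN N f = sumN N g.
Proof. induction N; intros H; simpl; auto. rewrite IHN, H; auto. Qed.

Lemma sumN_plus N f g : sumN N (fun k => f k + g k) = sumN N f + sumN N g.
Proof. induction N; simpl; [ring|]. rewrite IHN. ring. Qed.

Lemma sumN_scal N c f : sumN N (fun k => c * f k) = c * sumN N f.
Proof. induction N; simpl; [ring|]. rewrite IHN. ring. Qed.

Lemma sumN_nonneg N f : (forall k, (k < N)%nat -> 0 <= f k) -> 0 <= sumN N f.
Proof.
  induction N; intros H; simpl; [lra|].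
  pose proof (H N ltac:(lia)). assert (0 <= sumN N f) by (apply IHN; auto). lra.
Qed.

Lemma sumN_ge_term N f k : (forall j, (j < N)%nat -> 0 <= f j) -> (k < N)%nat ->
  f k <= sumN N f.
Proof.
  induction N as [|N IH]; intros H Hk; [lia|]. simpl.
  destruct (Nat.eq_dec k N) as [->|Hne].
  - pose proof (sumN_nonneg N f ltac:(auto)). lra.
  - pose proof (H N ltac:(lia)). pose proof (IH ltac:(auto) ltac:(lia)). lra.
Qed.

Lemma sumN_single N j c (g : nat -> R) : (j < N)%nat ->
  sumN N (fun k => (if Nat.eq_dec k j then c else 0) * g k) = c * g j.
Proof.
  induction N as [|N IH]; intros Hj; simpl; [lia|].
  destruct (Nat.eq_dec N j) as [->|Hne].
  - rewrite (sumN_ext _ _ (fun k => 0 * g k)), sumN_scal; [ring|].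
    intros k Hk. destruct (Nat.eq_dec k j); [lia|ring].
  - rewrite IH by lia. ring.
Qed.

Lemma sumN_two_terms N j1 j2 c1 c2 (g : nat -> R) : j1 <> j2 -> (j1 < N)%nat -> (j2 < N)%nat ->
  sumN N (fun k => (if Nat.eq_dec k j1 then c1 else if Nat.eq_dec k j2 then c2 else 0) * g k) =
  c1 * g j1 + c2 * g j2.
Proof.
  intros Hne H1 H2.
  rewrite (sumN_ext N _ (fun k => (if Nat.eq_dec k j1 then c1 else 0) * g k +
                                  (if Nat.eq_dec k j2 then c2 else 0) * g k)).
  - rewrite sumN_plus, !sumN_single; auto.
  - intros k _. destruct (Nat.eq_dec k j1), (Nat.eq_dec k j2); subst; try ring. contradiction.
Qed.

Definition closeN (N : nat) (x y : nat -> R) (r : R) : Prop :=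
  forall k, (k < N)%nat -> Rabs (y k - x k) < r.

(* [contN N f] unfolds to [forall x, contN_at N f x]. *)
Definition contN_at (N : nat) (f : (nat -> R) -> R) (x : nat -> R) : Prop :=
  forall eps, 0 < eps -> exists del, 0 < del /\
    forall y, closeN N x y del -> Rabs (f y - f x) < eps.

Definition unif_contN (N : nat) (f : (nat -> R) -> R) : Prop :=
  forall eps, 0 < eps -> exists del, 0 < del /\
    forall x y, closeN N x y del -> Rabs (f y - f x) < eps.

Lemma closeN_refl N x r : 0 < r -> closeN N x x r.
Proof. intros Hr k _. rewrite Rminus_diag, Rabs_R0. exact Hr. Qed.

Lemma closeN_mono N x y r r' : r <= r' -> closeN N x y r -> closeN N x y r'.
Proof. intros Hr H k Hk. specialize (H k Hk). lra. Qed.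

Lemma closeN_upd N x y r j s : closeN N x y r -> closeN N (upd x j s) (upd y j s) r.
Proof.
  intros H k Hk. unfold upd. destruct (Nat.eq_dec k j).
  - rewrite Rminus_diag, Rabs_R0. specialize (H k Hk). pose proof (Rabs_pos (y k - x k)). lra.
  - apply H; auto.
Qed.

Lemma closeN_upd_line N x r j s s' : 0 < r -> Rabs (s' - s) < r ->
  closeN N (upd x j s) (upd x j s') r.
Proof.
  intros Hr H k Hk. unfold upd. destruct (Nat.eq_dec k j); auto.
  rewrite Rminus_diag, Rabs_R0; auto.
Qed.

Lemma closeN_upd_self N x k t r : 0 < r -> Rabs (t - x k) < r -> closeN N x (upd x k t) r.
Proof. intros Hr H. rewrite <- (upd_id x k) at 1. apply closeN_upd_line; auto. Qed.

Lemma continuity_pt_eps (phi : R -> R) z : continuity_pt phi z <->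
  forall eps, 0 < eps -> exists del, 0 < del /\
    forall w, Rabs (w - z) < del -> Rabs (phi w - phi z) < eps.
Proof.
  unfold continuity_pt, continue_in, limit1_in, limit_in; simpl; unfold R_dist.
  split; intros H eps He; destruct (H eps He) as [del [Hdel Hw]];
    exists del; split; auto.
  - intros w Hwz. destruct (Req_dec w z) as [->|Hne].
    + rewrite Rminus_diag, Rabs_R0; auto.
    + apply Hw. split; [split; [exact I|auto]|exact Hwz].
  - intros w [_ Hwz]. apply Hw, Hwz.
Qed.

Lemma contN_at_const N c x : contN_at N (fun _ => c) x.
Proof. intros eps He. exists 1. split; [lra|]. intros. rewrite Rminus_diag, Rabs_R0; auto. Qed.

Lemma contN_at_coord N k x : (k < N)%nat -> contN_at N (fun y => y k) x.
Proof. intros Hk eps He. exists eps. split; auto. Qed.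

Lemma contN_at_plus N f g x : contN_at N f x -> contN_at N g x ->
  contN_at N (fun y => f y + g y) x.
Proof.
  intros Hf Hg eps He.
  destruct (Hf (eps / 2) ltac:(lra)) as [d1 [Hd1 H1]].
  destruct (Hg (eps / 2) ltac:(lra)) as [d2 [Hd2 H2]].
  exists (Rmin d1 d2). split; [apply Rmin_pos; auto|]. intros y Hy.
  specialize (H1 y (closeN_mono _ _ _ _ _ (Rmin_l d1 d2) Hy)).
  specialize (H2 y (closeN_mono _ _ _ _ _ (Rmin_r d1 d2) Hy)).
  replace (f y + g y - (f x + g x)) with ((f y - f x) + (g y - g x)) by ring.
  eapply Rle_lt_trans; [apply Rabs_triang|lra].
Qed.

Lemma contN_at_mult N f g x : contN_at N f x -> contN_at N g x ->
  contN_at N (fun y => f y * g y) x.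
Proof.
  intros Hf Hg eps He.
  set (C := Rabs (f x) + Rabs (g x) + 1).
  assert (HC : 1 <= C) by (unfold C; pose proof (Rabs_pos (f x)); pose proof (Rabs_pos (g x)); lra).
  set (e := Rmin 1 (eps / (2 * C))).
  assert (He0 : 0 < e) by (apply Rmin_pos; [lra|apply Rdiv_lt_0_compat; lra]).
  assert (He1 : e <= 1) by apply Rmin_l.
  assert (HeC : e * C <= eps / 2).
  { apply Rle_trans with (eps / (2 * C) * C).
    - apply Rmult_le_compat_r; [lra|apply Rmin_r].
    - right. field. lra. }
  destruct (Hf e He0) as [d1 [Hd1 H1]]. destruct (Hg e He0) as [d2 [Hd2 H2]].
  exists (Rmin d1 d2). split; [apply Rmin_pos; auto|]. intros y Hy.
  specialize (H1 y (closeN_mono _ _ _ _ _ (Rmin_l d1 d2) Hy)).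
  specialize (H2 y (closeN_mono _ _ _ _ _ (Rmin_r d1 d2) Hy)).
  replace (f y * g y - f x * g x) with
    ((f y - f x) * (g y - g x) + f x * (g y - g x) + g x * (f y - f x)) by ring.
  eapply Rle_lt_trans; [apply Rabs_triang|].
  eapply Rle_lt_trans; [apply Rplus_le_compat_r, Rabs_triang|].
  rewrite !Rabs_mult.
  pose proof (Rabs_pos (f y - f x)); pose proof (Rabs_pos (g y - g x)).
  pose proof (Rabs_pos (f x)); pose proof (Rabs_pos (g x)).
  assert (Rabs (f y - f x) * Rabs (g y - g x) <= e * 1) by (apply Rmult_le_compat; lra).
  assert (Rabs (f x) * Rabs (g y - g x) <= Rabs (f x) * e) by (apply Rmult_le_compat_l; lra).
  assert (Rabs (g x) * Rabs (f y - f x) <= Rabs (g x) * e) by (apply Rmult_le_compat_l; lra).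
  unfold C in HeC. nra.
Qed.

Lemma contN_at_comp N f phi x : contN_at N f x -> continuity_pt phi (f x) ->
  contN_at N (fun y => phi (f y)) x.
Proof.
  intros Hf Hp eps He. destruct (proj1 (continuity_pt_eps phi (f x)) Hp eps He) as [d [Hd H]].
  destruct (Hf d Hd) as [d' [Hd' H']]. exists d'. split; auto.
Qed.

Lemma contN_at_local N f g x : (exists r, 0 < r /\ forall y, closeN N x y r -> f y = g y) ->
  contN_at N g x -> contN_at N f x.
Proof.
  intros [r [Hr E]] H eps He. destruct (H eps He) as [d [Hd Hw]].
  exists (Rmin d r). split; [apply Rmin_pos; auto|]. intros y Hy.
  rewrite (E y), (E x).
  - apply Hw, (closeN_mono _ _ _ _ _ (Rmin_l d r) Hy).
  - apply closeN_refl; auto.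
  - apply (closeN_mono _ _ _ _ _ (Rmin_r d r) Hy).
Qed.

Lemma contN_at_dot N nu x : contN_at N (fun y => dotN N y nu) x.
Proof.
  unfold dotN.
  assert (G : forall M, (M <= N)%nat -> contN_at N (fun y => sumN M (fun k => y k * nu k)) x).
  { induction M as [|M IH]; intros HM; simpl.
    - apply contN_at_const.
    - apply contN_at_plus; [apply IH; lia|].
      apply contN_at_mult; [apply contN_at_coord; lia|apply contN_at_const]. }
  apply G. lia.
Qed.

Lemma unif_contN_upd N f j s : unif_contN N f -> unif_contN N (fun x => f (upd x j s)).
Proof.
  intros H eps He. destruct (H eps He) as [d [Hd Hf]]. exists d; split; auto.
  intros x y Hxy. apply Hf, closeN_upd, Hxy.
Qed.

Lemma unif_contN_lin N a b f g : unif_contN N f -> unif_contN N g ->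
  unif_contN N (fun x => a * f x + b * g x).
Proof.
  intros Hf Hg eps He.
  set (e := eps / (Rabs a + Rabs b + 1)).
  assert (Hab : 0 < Rabs a + Rabs b + 1) by (pose proof (Rabs_pos a); pose proof (Rabs_pos b); lra).
  assert (He' : 0 < e) by (apply Rdiv_lt_0_compat; auto).
  destruct (Hf e He') as [d1 [Hd1 H1]]. destruct (Hg e He') as [d2 [Hd2 H2]].
  exists (Rmin d1 d2). split; [apply Rmin_pos; auto|]. intros x y Hxy.
  specialize (H1 x y (closeN_mono _ _ _ _ _ (Rmin_l d1 d2) Hxy)).
  specialize (H2 x y (closeN_mono _ _ _ _ _ (Rmin_r d1 d2) Hxy)).
  replace (a * f y + b * g y - (a * f x + b * g x)) with (a * (f y - f x) + b * (g y - g x))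
    by ring.
  eapply Rle_lt_trans; [apply Rabs_triang|]. rewrite !Rabs_mult.
  assert (Rabs a * Rabs (f y - f x) <= Rabs a * e)
    by (apply Rmult_le_compat_l; [apply Rabs_pos|lra]).
  assert (Rabs b * Rabs (g y - g x) <= Rabs b * e)
    by (apply Rmult_le_compat_l; [apply Rabs_pos|lra]).
  assert ((Rabs a + Rabs b + 1) * e = eps) by (unfold e; field; lra).
  nra.
Qed.

Lemma unif_contN_abs N f : unif_contN N f -> unif_contN N (fun x => Rabs (f x)).
Proof.
  intros H eps He. destruct (H eps He) as [d [Hd Hf]]. exists d; split; auto.
  intros x y Hxy. eapply Rle_lt_trans; [apply Rabs_triang_inv2|]. apply Hf; auto.
Qed.

(** * Cousin's lemma on boxes *)

Definition inbox (N : nat) (lo hi x : nat -> R) : Prop :=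
  forall k, (k < N)%nat -> lo k <= x k <= hi k.

Definition box_ordered (N : nat) (lo hi : nat -> R) : Prop :=
  forall k, (k < N)%nat -> lo k <= hi k.

Lemma inbox_split N lo hi j m x : inbox N lo hi x ->
  inbox N lo (upd hi j m) x \/ inbox N (upd lo j m) hi x.
Proof.
  intros H. destruct (Rle_dec (x j) m) as [Hm|Hm]; [left|right]; intros k Hk;
    destruct (H k Hk); unfold upd; destruct (Nat.eq_dec k j); subst; split; auto; lra.
Qed.

Lemma nested_boxes_point N (lo hi : nat -> nat -> R) :
  (forall t k, (k < N)%nat -> lo t k <= lo (S t) k /\ hi (S t) k <= hi t k /\ lo t k <= hi t k) ->
  exists z, forall t, inbox N (lo t) (hi t) z.
Proof.
  intros Hnest.
  assert (Hcross : forall s t k, (k < N)%nat -> lo s k <= hi t k).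
  { assert (Hlo : forall s j k, (k < N)%nat -> lo s k <= lo (s + j)%nat k).
    { intros s j k Hk. induction j; [rewrite Nat.add_0_r; lra|].
      rewrite Nat.add_succ_r. pose proof (Hnest (s + j)%nat k Hk). lra. }
    assert (Hhi : forall s j k, (k < N)%nat -> hi (s + j)%nat k <= hi s k).
    { intros s j k Hk. induction j; [rewrite Nat.add_0_r; lra|].
      rewrite Nat.add_succ_r. pose proof (Hnest (s + j)%nat k Hk). lra. }
    intros s t k Hk. destruct (Nat.le_ge_cases s t) as [H|H].
    - replace t with (s + (t - s))%nat by lia.
      pose proof (Hlo s (t - s)%nat k Hk). pose proof (Hnest (s + (t - s))%nat k Hk). lra.
    - replace s with (t + (s - t))%nat by lia.
      pose proof (Hhi t (s - t)%nat k Hk). pose proof (Hnest (t + (s - t))%nat k Hk). lra. }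
  assert (Hlim : forall k, exists l, (k < N)%nat -> Un_cv (fun t => lo t k) l).
  { intros k. destruct (Compare_dec.lt_dec k N) as [Hk|Hk]; [|exists 0; lia].
    destruct (growing_cv (fun t => lo t k)) as [l Hl].
    - intros t. apply Hnest, Hk.
    - exists (hi O k). intros x [t ->]. apply Hcross, Hk.
    - exists l. auto. }
  destruct (choice _ Hlim) as [z Hz]. exists z. intros t k Hk. split.
  - apply (growing_ineq (fun t => lo t k)); [intros s; apply Hnest, Hk|auto].
  - apply (Rle_cv_lim (Un := fun s => lo s k) (Vn := fun _ => hi t k)).
    + intros s. apply Hcross, Hk.
    + apply Hz, Hk.
    + intros eps He. exists O. intros. unfold R_dist. rewrite Rminus_diag, Rabs_R0. exact He.
Qed.

Section Cousin.

Variable N : nat.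
Variable L : (nat -> R) -> (nat -> R) -> Prop.

Hypothesis L_split : forall lo hi j m, (j < N)%nat -> lo j <= m -> m <= hi j ->
  L lo (upd hi j m) -> L (upd lo j m) hi -> L lo hi.

Hypothesis L_local : forall z, exists r, 0 < r /\ forall lo hi, inbox N lo hi z ->
  (forall k, (k < N)%nat -> hi k - lo k < r) -> L lo hi.

Definition halves (lo hi lo' hi' : nat -> R) : Prop :=
  forall k, (k < N)%nat ->
    lo k <= lo' k /\ hi' k <= hi k /\ hi' k - lo' k = (hi k - lo k) / 2.

Lemma bad_box_halves_upto lo hi : ~ L lo hi -> box_ordered N lo hi ->
  forall m, exists lo' hi', ~ L lo' hi' /\ forall k, (k < N)%nat ->
    lo k <= lo' k /\ hi' k <= hi k /\
    hi' k - lo' k = if Compare_dec.lt_dec k m then (hi k - lo k) / 2 else hi k - lo k.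
Proof.
  intros Hbad Hord m. induction m as [|m [lo' [hi' [Hbad' Hb]]]].
  - exists lo, hi. split; auto. intros k Hk.
    destruct (Compare_dec.lt_dec k 0); [lia|lra].
  - assert (Hwidth : forall k, (k < N)%nat -> (m <= k)%nat -> hi' k - lo' k = hi k - lo k).
    { intros k Hk Hmk. destruct (Hb k Hk) as [_ [_ E]].
      destruct (Compare_dec.lt_dec k m); [lia|auto]. }
    destruct (Compare_dec.lt_dec m N) as [HmN|HmN].
    + set (mid := (lo' m + hi' m) / 2).
      pose proof (Hord m HmN). pose proof (Hwidth m HmN (le_n m)).
      destruct (not_and_or _ _ (fun C => Hbad' (L_split lo' hi' m mid HmN
        ltac:(unfold mid; lra) ltac:(unfold mid; lra) (proj1 C) (proj2 C)))) as [D|D];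
        [exists lo', (upd hi' m mid)|exists (upd lo' m mid), hi']; split; auto;
        intros k Hk; destruct (Hb k Hk) as [C1 [C2 C3]];
        destruct (Nat.eq_dec k m) as [->|Hne];
        rewrite ?upd_same, ?upd_other by auto;
        destruct (Compare_dec.lt_dec _ (S m)), (Compare_dec.lt_dec _ m);
        try lia; unfold mid; repeat split; lra.
    + exists lo', hi'. split; auto. intros k Hk. destruct (Hb k Hk) as [C1 [C2 C3]].
      destruct (Compare_dec.lt_dec k (S m)), (Compare_dec.lt_dec k m); try lia; auto.
Qed.

Lemma cousin lo hi : box_ordered N lo hi -> L lo hi.
Proof.
  (* Bisect a bad box forever: the nested bad boxes shrink to a point [z], near which all
     small boxes are good. *)
  intros Hord0. apply NNPP. intros Hbad0.
  assert (Hstep : forall b : (nat -> R) * (nat -> R), exists b',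
    ~ L (fst b) (snd b) -> box_ordered N (fst b) (snd b) ->
    ~ L (fst b') (snd b') /\ halves (fst b) (snd b) (fst b') (snd b')).
  { intros [l h]. destruct (classic (~ L l h /\ box_ordered N l h)) as [[Hb Ho]|Hn].
    - destruct (bad_box_halves_upto l h Hb Ho N) as [l' [h' [Hb' Hk]]].
      exists (l', h'). intros _ _. split; auto. intros k Hk'. destruct (Hk k Hk') as [? [? E]].
      destruct (Compare_dec.lt_dec k N); [auto|lia].
    - exists (l, h). intros Hb Ho. exfalso. auto. }
  destruct (choice _ Hstep) as [next Hnext].
  set (b := fun t => Nat.iter t next (lo, hi)).
  assert (Hb : forall t, ~ L (fst (b t)) (snd (b t)) /\ box_ordered N (fst (b t)) (snd (b t)) /\
    forall k, (k < N)%nat -> snd (b t) k - fst (b t) k = (hi k - lo k) / 2 ^ t).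
  { induction t as [|t [Hbad [Ho Hw]]].
    - split; [auto|split; [auto|]]. intros k Hk. simpl. field.
    - destruct (Hnext (b t) Hbad Ho) as [Hbad' Hh]. change (b (S t)) with (next (b t)).
      split; [auto|split]; intros k Hk; destruct (Hh k Hk) as [_ [_ E]].
      + pose proof (Ho k Hk). lra.
      + rewrite E, Hw by auto. simpl. field. apply pow_nonzero. lra. }
  destruct (nested_boxes_point N (fun t => fst (b t)) (fun t => snd (b t))) as [z Hz].
  { intros t k Hk. destruct (Hb t) as [Hbad [Ho _]].
    destruct (Hnext (b t) Hbad Ho) as [_ Hh]. change (b (S t)) with (next (b t)).
    destruct (Hh k Hk) as [? [? _]]. pose proof (Ho k Hk). lra. }
  destruct (L_local z) as [r [Hr Hz']].
  set (S := sumN N (fun k => hi k - lo k)).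
  assert (HS : forall k, (k < N)%nat -> hi k - lo k <= S).
  { intros k Hk. apply (sumN_ge_term N (fun k => hi k - lo k)); auto.
    intros j Hj. pose proof (Hord0 j Hj). lra. }
  destruct (cv_pow_half S r Hr) as [t Ht]. specialize (Ht t (le_n t)).
  unfold R_dist in Ht. rewrite Rminus_0_r in Ht.
  destruct (Hb t) as [Hbad [_ Hw]]. apply Hbad, Hz'; auto.
  intros k Hk. rewrite Hw by auto.
  assert (0 < 2 ^ t) by (apply pow_lt; lra).
  apply Rle_lt_trans with (S / 2 ^ t).
  - unfold Rdiv. apply Rmult_le_compat_r; [left; apply Rinv_0_lt_compat; auto|auto].
  - eapply Rle_lt_trans; [apply Rle_abs|exact Ht].
Qed.

End Cousin.

Definition supp_bounded (m : nat) (R0 : R) (f : (nat -> R) -> R) : Prop :=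
  forall x, f x <> 0 -> forall k, (k < m)%nat -> Rabs (x k) <= R0.

Lemma unif_contN_of_supp_bounded N R0 f : contN N f -> supp_bounded N R0 f -> unif_contN N f.
Proof.
  intros Hc Hs eps He.
  set (L := fun lo hi => exists del, 0 < del /\ forall x y, inbox N lo hi x -> closeN N x y del ->
              Rabs (f y - f x) < eps).
  assert (HL : forall lo hi, box_ordered N lo hi -> L lo hi).
  { apply cousin.
    - intros lo hi j m Hj H1 H2 [d1 [Hd1 L1]] [d2 [Hd2 L2]].
      exists (Rmin d1 d2). split; [apply Rmin_pos; auto|].
      intros x y Hx Hxy. destruct (inbox_split N lo hi j m x Hx) as [B|B];
        [apply L1|apply L2]; eauto using closeN_mono, Rmin_l, Rmin_r.
    - intros z. destruct (Hc z (eps / 2) ltac:(lra)) as [d [Hd Hz]].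
      exists (d / 2). split; [lra|]. intros lo hi Hin Hw.
      exists (d / 2). split; [lra|]. intros x y Hx Hxy.
      assert (Hxz : closeN N z x (d / 2)).
      { intros k Hk. destruct (Hx k Hk), (Hin k Hk). specialize (Hw k Hk).
        apply Rabs_def1; lra. }
      assert (A1 : Rabs (f x - f z) < eps / 2)
        by (apply Hz, (closeN_mono N z x (d / 2) d ltac:(lra) Hxz)).
      assert (A2 : Rabs (f y - f z) < eps / 2).
      { apply Hz. intros k Hk. specialize (Hxz k Hk). specialize (Hxy k Hk).
        replace (y k - z k) with ((y k - x k) + (x k - z k)) by ring.
        eapply Rle_lt_trans; [apply Rabs_triang|lra]. }
      replace (f y - f x) with ((f y - f z) - (f x - f z)) by ring.
      eapply Rle_lt_trans; [apply Rabs_triang|]. rewrite Rabs_Ropp. lra. }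
  set (B := Rabs R0 + 1).
  assert (Hbox : forall x, f x <> 0 -> inbox N (fun _ => - B) (fun _ => B) x).
  { intros x Hx k Hk. specialize (Hs x Hx k Hk). pose proof (Rle_abs R0).
    apply Rabs_le_between in Hs. unfold B. lra. }
  destruct (HL (fun _ => - B) (fun _ => B)) as [d [Hd Hb]].
  { intros k Hk. pose proof (Rabs_pos R0). unfold B. lra. }
  exists d. split; auto. intros x y Hxy.
  destruct (Req_dec (f x) 0) as [Ex|Ex]; [destruct (Req_dec (f y) 0) as [Ey|Ey]|].
  - rewrite Ex, Ey, Rminus_diag, Rabs_R0. exact He.
  - rewrite Rabs_minus_sym. apply Hb; auto.
    intros k Hk. rewrite Rabs_minus_sym. apply Hxy, Hk.
  - apply Hb; auto.
Qed.

Lemma contN_pos_lower_bound N (K : (nat -> R) -> Prop) g :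
  contN N g -> closedN N K -> boundedN N K -> (forall x, K x -> 0 < g x) ->
  exists c, 0 < c /\ forall x, K x -> c <= g x.
Proof.
  intros Hc HK [R1 HB] Hpos.
  set (L := fun lo hi => exists c, 0 < c /\ forall x, inbox N lo hi x -> K x -> c <= g x).
  assert (HL : forall lo hi, box_ordered N lo hi -> L lo hi).
  { apply cousin.
    - intros lo hi j m Hj H1 H2 [c1 [Hc1 L1]] [c2 [Hc2 L2]].
      exists (Rmin c1 c2). split; [apply Rmin_pos; auto|].
      intros x Hx HKx. pose proof (Rmin_l c1 c2). pose proof (Rmin_r c1 c2).
      destruct (inbox_split N lo hi j m x Hx) as [B|B];
        [pose proof (L1 x B HKx)|pose proof (L2 x B HKx)]; lra.
    - intros z. destruct (classic (K z)) as [Kz|Kz].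
      + pose proof (Hpos z Kz). destruct (Hc z (g z / 2) ltac:(lra)) as [d [Hd Hz]].
        exists d. split; auto. intros lo hi Hin Hw. exists (g z / 2). split; [lra|].
        intros x Hx _. assert (A : Rabs (g x - g z) < g z / 2).
        { apply Hz. intros k Hk. destruct (Hx k Hk), (Hin k Hk). specialize (Hw k Hk).
          apply Rabs_def1; lra. }
        apply Rabs_def2 in A. lra.
      +         assert (E : exists e, 0 < e /\ forall eta, K eta ->
                      ~ (forall k, (k < N)%nat -> Rabs (eta k - z k) < e)).
        { apply NNPP. intros Hn. apply Kz, HK. intros e He. apply NNPP. intros Hn2.
          apply Hn. exists e. split; auto. intros eta Heta Hcl. apply Hn2. eauto. }
        destruct E as [e [He HE]]. exists e. split; auto. intros lo hi Hin Hw.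
        exists 1. split; [lra|]. intros x Hx HKx. exfalso. apply (HE x HKx).
        intros k Hk. destruct (Hx k Hk), (Hin k Hk). specialize (Hw k Hk).
        apply Rabs_def1; lra. }
  destruct (HL (fun _ => - Rabs R1) (fun _ => Rabs R1)) as [c [Hc0 Hcb]].
  { intros k Hk. pose proof (Rabs_pos R1). lra. }
  exists c. split; auto. intros x Kx. apply Hcb; auto. intros k Hk.
  specialize (HB x Kx k Hk). pose proof (Rle_abs R1). apply Rabs_le_between in HB. lra.
Qed.

(** * Iterated integrals over cubes *)

Lemma RInt_Defs_eq f a b : ex_RInt f a b -> Defs.RInt f a b = RInt f a b.
Proof.
  intros H. unfold Defs.RInt. destruct (excluded_middle_informative _) as [H1|H1].
  - destruct (constructive_indefinite_description _ _) as [pr Hpr]. simpl.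
    symmetry. apply RInt_Reals.
  - exfalso. apply H1. exists (ex_RInt_Reals_0 _ _ _ H). auto.
Qed.

Lemma RInt_lincomb (f g : R -> R) a b c1 c2 : ex_RInt f a b -> ex_RInt g a b ->
  RInt (fun x => c1 * f x + c2 * g x) a b = c1 * RInt f a b + c2 * RInt g a b.
Proof.
  intros [If Hf] [Ig Hg]. apply is_RInt_unique.
  rewrite (is_RInt_unique _ _ _ _ Hf), (is_RInt_unique _ _ _ _ Hg).
  apply (is_RInt_plus (fun x => c1 * f x) (fun x => c2 * g x));
    [apply (is_RInt_scal f)|apply (is_RInt_scal g)]; assumption.
Qed.

Lemma ex_RInt_lincomb (f g : R -> R) a b c1 c2 : ex_RInt f a b -> ex_RInt g a b ->
  ex_RInt (fun x => c1 * f x + c2 * g x) a b.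
Proof.
  intros H1 H2. apply (ex_RInt_plus (fun x => c1 * f x) (fun x => c2 * g x));
    [apply (ex_RInt_scal f)|apply (ex_RInt_scal g)]; assumption.
Qed.

Lemma RInt_vanishing_zero (g : R -> R) a b : a <= b -> (forall x, a < x < b -> g x = 0) ->
  RInt g a b = 0.
Proof.
  intros Hab H. rewrite (RInt_ext g (fun _ => 0)), RInt_const.
  - unfold scal; simpl; unfold mult; simpl; ring.
  - intros x Hx. rewrite Rmin_left, Rmax_right in Hx by auto. auto.
Qed.

Lemma intCube_zero M m : intCube m M (fun _ => 0) = 0.
Proof.
  induction m as [|m IH]; simpl; auto.
  rewrite IH, RInt_Defs_eq, RInt_const by apply ex_RInt_const.
  unfold scal; simpl; unfold mult; simpl. ring.
Qed.

Definition cube_lipschitz (N m : nat) (M : R) : Prop :=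
  forall f g eps, unif_contN N f -> unif_contN N g -> (forall x, Rabs (f x - g x) <= eps) ->
    Rabs (intCube m M f - intCube m M g) <= (2 * M) ^ m * eps.

Lemma exists_mult_lt C eps : 0 <= C -> 0 < eps -> exists e, 0 < e /\ C * e < eps.
Proof.
  intros HC He. exists (eps / (C + 1)). split; [apply Rdiv_lt_0_compat; lra|].
  apply Rlt_le_trans with ((C + 1) * (eps / (C + 1))).
  - apply Rmult_lt_compat_r; [apply Rdiv_lt_0_compat|]; lra.
  - right. field. lra.
Qed.

Lemma intCube_slice_continuous N m M f j s0 : 0 <= M -> cube_lipschitz N m M ->
  unif_contN N f -> continuous (fun s => intCube m M (fun x => f (upd x j s))) s0.
Proof.
  intros HM Hlip Hf. apply continuity_pt_filterlim, continuity_pt_eps. intros eps He.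
  destruct (exists_mult_lt ((2 * M) ^ m) eps (pow_le (2 * M) m ltac:(lra)) He) as [e [He' Hlt]].
  destruct (Hf e He') as [d [Hd Hfd]]. exists d; split; auto. intros y Hy.
  eapply Rle_lt_trans; [|exact Hlt]. apply Hlip; try apply unif_contN_upd; auto.
  intros x. left. apply Hfd, closeN_upd_line; auto.
Qed.

Lemma intCube_lipschitz N M m : 0 <= M -> cube_lipschitz N m M.
Proof.
  intros HM. induction m as [|m IH]; intros f g eps Hf Hg H; simpl intCube.
  - rewrite Rmult_1_l. apply H.
  - pose proof (fun s => intCube_slice_continuous N m M f m s HM IH Hf) as Cf.
    pose proof (fun s => intCube_slice_continuous N m M g m s HM IH Hg) as Cg.
    assert (Ef : ex_RInt (fun s => intCube m M (fun x => f (upd x m s))) (-M) M)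
      by (apply (@ex_RInt_continuous R_CompleteNormedModule); auto).
    assert (Eg : ex_RInt (fun s => intCube m M (fun x => g (upd x m s))) (-M) M)
      by (apply (@ex_RInt_continuous R_CompleteNormedModule); auto).
    rewrite !RInt_Defs_eq by auto.
    change (Rabs (minus (RInt (fun s => intCube m M (fun x => f (upd x m s))) (- M) M)
                        (RInt (fun s => intCube m M (fun x => g (upd x m s))) (- M) M))
            <= (2 * M) ^ S m * eps).
    rewrite <- (RInt_minus _ _ _ _ Ef Eg).
    replace ((2 * M) ^ S m * eps) with ((M - - M) * ((2 * M) ^ m * eps)) by (simpl; ring).
    apply abs_RInt_le_const; [lra|apply ex_RInt_minus; auto|].
    intros t _. apply IH; try apply unif_contN_upd; auto.
Qed.

Lemma ex_RInt_intCube_slice N m M f j a b : 0 <= M -> unif_contN N f ->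
  ex_RInt (fun s => intCube m M (fun x => f (upd x j s))) a b.
Proof.
  intros HM Hf. apply (@ex_RInt_continuous R_CompleteNormedModule). intros z _.
  apply (intCube_slice_continuous N); auto. apply intCube_lipschitz; auto.
Qed.

Lemma intCube_lincomb N M m a b f g : 0 <= M -> unif_contN N f -> unif_contN N g ->
  intCube m M (fun x => a * f x + b * g x) = a * intCube m M f + b * intCube m M g.
Proof.
  intros HM. revert f g. induction m as [|m IH]; intros f g Hf Hg; [reflexivity|]. simpl intCube.
  replace (fun s => intCube m M (fun x => a * f (upd x m s) + b * g (upd x m s))) with
    (fun s => a * intCube m M (fun x => f (upd x m s)) + b * intCube m M (fun x => g (upd x m s))).
  - pose proof (ex_RInt_intCube_slice N m M f m (-M) M HM Hf).
    pose proof (ex_RInt_intCube_slice N m M g m (-M) M HM Hg).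
    rewrite !RInt_Defs_eq by (auto using ex_RInt_lincomb). apply RInt_lincomb; auto.
  - apply functional_extensionality. intros s. symmetry. apply IH; apply unif_contN_upd; auto.
Qed.

Lemma intCube_le N M m f g : 0 <= M -> unif_contN N f -> unif_contN N g ->
  (forall x, f x <= g x) -> intCube m M f <= intCube m M g.
Proof.
  intros HM. revert f g. induction m as [|m IH]; intros f g Hf Hg H; simpl intCube; auto.
  rewrite !RInt_Defs_eq by (apply (ex_RInt_intCube_slice N); auto).
  apply RInt_le; [lra|apply (ex_RInt_intCube_slice N); auto|apply (ex_RInt_intCube_slice N); auto|].
  intros s _. apply IH; try apply unif_contN_upd; auto.
Qed.

Lemma intCube_supp_stable_le N R0 m f M M' : 0 <= R0 -> R0 <= M -> M <= M' ->
  unif_contN N f -> supp_bounded m R0 f -> intCube m M' f = intCube m M f.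
Proof.
  intros HR0 HM HM'. revert f. induction m as [|m IH]; intros f Hf Hs; simpl intCube; auto.
  assert (Hslice : forall s, supp_bounded m R0 (fun x => f (upd x m s))).
  { intros s x Hx k Hk. specialize (Hs _ Hx k ltac:(lia)). rewrite upd_other in Hs by lia. auto. }
  replace (fun s => intCube m M' (fun x => f (upd x m s))) with
          (fun s => intCube m M (fun x => f (upd x m s))).
  2:{ apply functional_extensionality; intro s. symmetry.
      apply IH; auto. apply unif_contN_upd; auto. }
  set (Phi := fun s => intCube m M (fun x => f (upd x m s))).
  assert (Hout : forall s, R0 < Rabs s -> Phi s = 0).
  { intros s Hs'. unfold Phi. rewrite <- (intCube_zero M m). f_equal.
    apply functional_extensionality; intro x. destruct (Req_dec (f (upd x m s)) 0) as [E|E]; auto.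
    specialize (Hs _ E m ltac:(lia)). rewrite upd_same in Hs. lra. }
  assert (HPhi : forall a b, ex_RInt Phi a b)
    by (intros; apply (ex_RInt_intCube_slice N); [lra|auto]).
  rewrite !RInt_Defs_eq by auto.
  rewrite <- (RInt_Chasles Phi (-M') (-M) M'), <- (RInt_Chasles Phi (-M) M M') by auto.
  rewrite (RInt_vanishing_zero Phi (-M') (-M)), (RInt_vanishing_zero Phi M M'); try lra.
  - unfold plus; simpl. ring.
  - intros x Hx. apply Hout. rewrite Rabs_pos_eq; lra.
  - intros x Hx. apply Hout. rewrite Rabs_left; lra.
Qed.

Lemma integralRN_intCube N R0 M f : 0 <= R0 -> R0 <= M -> unif_contN N f ->
  supp_bounded N R0 f -> integralRN N f = intCube N M f.
Proof.
  intros HR0 HM Hf Hs.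
  assert (Hstable : forall M', R0 <= M' -> intCube N M' f = intCube N M f).
  { intros M' HM'. destruct (Rle_dec M M').
    - apply (intCube_supp_stable_le N R0); auto.
    - symmetry. apply (intCube_supp_stable_le N R0); auto; lra. }
  assert (C : Un_cv (fun m => intCube N (INR m) f) (intCube N M f)).
  { destruct (INR_unbounded M) as [m0 Hm0]. intros eps He. exists m0. intros m Hm.
    unfold R_dist. rewrite Hstable, Rminus_diag, Rabs_R0; auto.
    apply le_INR in Hm. lra. }
  unfold integralRN. destruct (excluded_middle_informative _) as [H|H].
  - destruct (constructive_indefinite_description _ _) as [l Hl]. simpl.
    eapply UL_sequence; eauto.
  - exfalso; apply H; eauto.
Qed.

Lemma pd_eq k f x l : pder k f x l -> pd k f x = l.
Proof.
  intros H. unfold pd. destruct (excluded_middle_informative _) as [H1|H1].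
  - destruct (constructive_indefinite_description _ _) as [l' Hl']. simpl.
    eapply uniqueness_limite; eauto.
  - exfalso; eauto.
Qed.

Lemma pder_pd k f x : (exists l, pder k f x l) -> pder k f x (pd k f x).
Proof. intros [l H]. rewrite (pd_eq k f x l H). exact H. Qed.

Lemma derivable_pt_lim_local (f g : R -> R) x l :
  (exists r, 0 < r /\ forall y, Rabs (y - x) < r -> f y = g y) ->
  derivable_pt_lim f x l -> derivable_pt_lim g x l.
Proof.
  intros [r [Hr E]] H. apply is_derive_Reals. apply is_derive_Reals in H.
  apply (is_derive_ext_loc f g); auto. exists (mkposreal r Hr). apply E.
Qed.

Lemma pd_locally_zero k f x :
  (exists r, 0 < r /\ forall t, Rabs (t - x k) < r -> f (upd x k t) = 0) -> pd k f x = 0.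
Proof.
  intros [r [Hr H]]. apply pd_eq. unfold pder.
  apply (derivable_pt_lim_local (fun _ => 0)); [|apply derivable_pt_lim_const].
  exists r. split; auto. intros y Hy. symmetry. apply H; auto.
Qed.

Lemma supp_bounded_pd N R0 k f : (k < N)%nat -> supp_bounded N R0 f -> supp_bounded N R0 (pd k f).
Proof.
  intros Hk Hs x Hx j Hj. apply NNPP. intros Hfar. apply Hx, pd_locally_zero.
  exists (Rabs (x j) - R0). split; [lra|]. intros t Ht.
  destruct (Req_dec (f (upd x k t)) 0) as [E|E]; auto. exfalso.
  specialize (Hs _ E j Hj). destruct (Nat.eq_dec j k) as [->|Hne].
  - rewrite upd_same in Hs. pose proof (Rabs_triang_inv (x k) t).
    rewrite Rabs_minus_sym in Ht. lra.
  - rewrite upd_other in Hs by auto. lra.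
Qed.

Lemma pder_line k F x t : (forall y, pder k F y (pd k F y)) ->
  derivable_pt_lim (fun s => F (upd x k s)) t (pd k F (upd x k t)).
Proof.
  intros HD. specialize (HD (upd x k t)). unfold pder in HD. rewrite upd_same in HD.
  replace (fun s => F (upd x k s)) with (fun s => F (upd (upd x k t) k s)); auto.
  apply functional_extensionality; intro s. rewrite upd_upd_same; auto.
Qed.

Lemma pder_freeze k j s F x : j <> k -> (forall y, pder k F y (pd k F y)) ->
  pder k (fun y => F (upd y j s)) x (pd k F (upd x j s)).
Proof.
  intros Hjk H. specialize (H (upd x j s)). unfold pder in *.
  rewrite upd_other in H by auto.
  replace (fun t => F (upd (upd x k t) j s)) with (fun t => F (upd (upd x j s) k t)); auto.
  apply functional_extensionality; intro t. rewrite upd_comm; auto.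
Qed.

Lemma mvt_pd k F x s h : (forall y, pder k F y (pd k F y)) ->
  exists c, Rabs (c - s) <= Rabs h /\
    F (upd x k (s + h)) - F (upd x k s) = pd k F (upd x k c) * h.
Proof.
  intros HD.
  assert (D : forall t, derivable_pt_lim (fun s => F (upd x k s)) t (pd k F (upd x k t)))
    by (intros t; apply pder_line, HD).
  destruct (MVT_gen (fun s => F (upd x k s)) s (s + h) (fun t => pd k F (upd x k t))) as [c [Hc E]].
  - intros t _. apply is_derive_Reals, D.
  - intros t _. apply derivable_continuous_pt. exists (pd k F (upd x k t)). apply D.
  - exists c. split; [|rewrite E; ring].
    revert Hc. unfold Rmin, Rmax. destruct (Rle_dec s (s + h)); intros Hc;
      unfold Rabs; destruct (Rcase_abs (c - s)), (Rcase_abs h); lra.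
Qed.

Lemma intCube_slice_deriv N M m F k s : 0 <= M -> unif_contN N F -> unif_contN N (pd k F) ->
  (forall x, pder k F x (pd k F x)) ->
  derivable_pt_lim (fun s => intCube m M (fun x => F (upd x k s))) s
                   (intCube m M (fun x => pd k F (upd x k s))).
Proof.
  intros HM HF HpF HD eps He.
  destruct (exists_mult_lt ((2 * M) ^ m) eps (pow_le (2 * M) m ltac:(lra)) He) as [e [He' Hlt]].
  destruct (HpF e He') as [d [Hd Hfd]].
  exists (mkposreal d Hd). intros h Hh0 Hh. simpl in Hh.
  set (DQ := fun x => / h * F (upd x k (s + h)) + - / h * F (upd x k s)).
  replace ((intCube m M (fun x => F (upd x k (s + h))) - intCube m M (fun x => F (upd x k s))) / h)
    with (intCube m M DQ)
    by (unfold DQ; rewrite (intCube_lincomb N); try apply unif_contN_upd; auto; field; auto).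
  eapply Rle_lt_trans; [|exact Hlt]. apply (intCube_lipschitz N M m HM).
  - apply unif_contN_lin; apply unif_contN_upd; auto.
  - apply unif_contN_upd; auto.
  - intros x. destruct (mvt_pd k F x s h HD) as [c [Hc Ec]].
    replace (DQ x) with (pd k F (upd x k c)).
    2:{ unfold DQ. replace (/ h * F (upd x k (s + h)) + - / h * F (upd x k s))
          with ((F (upd x k (s + h)) - F (upd x k s)) / h) by (field; auto).
        rewrite Ec. field. auto. }
    left. apply Hfd, closeN_upd_line; auto. lra.
Qed.

Lemma pder_mult k f g x lf lg : pder k f x lf -> pder k g x lg ->
  pder k (fun y => f y * g y) x (lf * g x + f x * lg).
Proof.
  unfold pder. intros Hf Hg. pose proof (derivable_pt_lim_mult _ _ _ _ _ Hf Hg) as H.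
  cbv beta in H. rewrite upd_id in H. exact H.
Qed.

Lemma pder_comp k f phi x lf lphi : pder k f x lf -> derivable_pt_lim phi (f x) lphi ->
  pder k (fun y => phi (f y)) x (lphi * lf).
Proof.
  unfold pder. intros Hf Hphi. rewrite <- (upd_id x k) in Hphi at 1.
  exact (derivable_pt_lim_comp _ _ _ _ _ Hf Hphi).
Qed.

Lemma pder_const_along k f x : (forall t, f (upd x k t) = f x) -> pder k f x 0.
Proof.
  intros H. unfold pder. apply (derivable_pt_lim_local (fun _ => f x));
    [|apply derivable_pt_lim_const].
  exists 1. split; [lra|]. intros. symmetry. apply H.
Qed.

Lemma pder_local k f g x l :
  (exists r, 0 < r /\ forall t, Rabs (t - x k) < r -> g (upd x k t) = f (upd x k t)) ->
  pder k g x l -> pder k f x l.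
Proof. intros Hloc. apply derivable_pt_lim_local. exact Hloc. Qed.

Lemma intCube_pd_vanish N M k m F : 0 <= M -> (k < m)%nat ->
  unif_contN N F -> unif_contN N (pd k F) -> (forall x, pder k F x (pd k F x)) ->
  (forall x, F (upd x k M) = 0) -> (forall x, F (upd x k (- M)) = 0) ->
  intCube m M (pd k F) = 0.
Proof.
  intros HM. revert F. induction m as [|m IH]; intros F Hkm HF HpF HD Htop Hbot; [lia|].
  simpl intCube. destruct (Nat.eq_dec k m) as [->|Hne].
  -     rewrite RInt_Defs_eq by (apply (ex_RInt_intCube_slice N); auto).
    apply is_RInt_unique.
    replace 0 with (minus (intCube m M (fun x => F (upd x m M)))
                          (intCube m M (fun x => F (upd x m (- M))))).
    + apply (is_RInt_derive (fun s => intCube m M (fun x => F (upd x m s)))).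
      * intros t _. apply is_derive_Reals, (intCube_slice_deriv N); auto.
      * intros t _. apply (intCube_slice_continuous N); auto. apply intCube_lipschitz; auto.
    + rewrite (functional_extensionality _ (fun _ => 0) Htop).
      rewrite (functional_extensionality _ (fun _ => 0) Hbot).
      rewrite intCube_zero. unfold minus, plus, opp; simpl. ring.
  - replace (fun s => intCube m M (fun x => pd k F (upd x m s))) with (fun _ : R => 0).
    + rewrite RInt_Defs_eq, RInt_const by apply ex_RInt_const.
      unfold scal; simpl; unfold mult; simpl. ring.
    + apply functional_extensionality; intro s.
      assert (E : (fun x => pd k F (upd x m s)) = pd k (fun y => F (upd y m s))).
      { apply functional_extensionality; intro x. symmetry. apply pd_eq, pder_freeze; auto. }
      rewrite E. symmetry. apply IH; try lia.
      * apply unif_contN_upd; auto.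
      * rewrite <- E. apply unif_contN_upd; auto.
      * intros x. rewrite <- E. apply pder_freeze; auto.
      * intros x. rewrite upd_comm by auto. apply Htop.
      * intros x. rewrite upd_comm by auto. apply Hbot.
Qed.

(** * The powers [|x|^q] *)

Lemma Rpower_pos x q : 0 < Rpower x q.
Proof. apply exp_pos. Qed.

Lemma powa_nonzero x q : x <> 0 -> powa x q = Rpower (Rabs x) q.
Proof. intros H. unfold powa. destruct (Req_dec_T x 0); [contradiction|reflexivity]. Qed.

Lemma powa_0 q : powa 0 q = 0.
Proof. unfold powa. destruct (Req_dec_T 0 0); [reflexivity|congruence]. Qed.

Lemma powa_ge0 x q : 0 <= powa x q.
Proof. unfold powa. destruct (Req_dec_T x 0); [lra|left; apply Rpower_pos]. Qed.

Lemma powa_Rpower_sqr x q : x <> 0 -> powa x q = Rpower (x * x) (q / 2).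
Proof.
  intros H. rewrite powa_nonzero by auto.
  assert (A : 0 < Rabs x) by (apply Rabs_pos_lt; auto).
  replace (x * x) with (Rabs x * Rabs x) by (unfold Rabs; destruct (Rcase_abs x); ring).
  rewrite <- Rpower_mult_distr, <- Rpower_plus by auto. f_equal. field.
Qed.

Lemma powa_deriv_nonzero x q : x <> 0 ->
  derivable_pt_lim (fun y => powa y q) x (q * x * powa x (q - 2)).
Proof.
  intros H. apply (derivable_pt_lim_local (fun y => Rpower (y * y) (q / 2))).
  - exists (Rabs x). split; [apply Rabs_pos_lt; auto|]. intros y Hy.
    rewrite powa_Rpower_sqr; auto. intros ->. rewrite Rminus_0_l, Rabs_Ropp in Hy. lra.
  - assert (P : 0 < x * x) by (apply Rsqr_pos_lt; auto).
    replace (q * x * powa x (q - 2)) with ((q / 2 * Rpower (x * x) (q / 2 - 1)) * (1 * x + x * 1)).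
    2:{ rewrite (powa_Rpower_sqr x (q - 2)) by auto.
        replace (q / 2 - 1) with ((q - 2) / 2) by field. field. }
    apply (derivable_pt_lim_comp (fun y => y * y) (fun z => Rpower z (q / 2))).
    + apply (derivable_pt_lim_mult id id); apply derivable_pt_lim_id.
    + apply derivable_pt_lim_power; auto.
Qed.

Lemma powa_small q eps : 0 < q -> 0 < eps ->
  exists d, 0 < d /\ forall w, Rabs w < d -> powa w q < eps.
Proof.
  intros Hq He. exists (Rpower eps (/ q)). split; [apply Rpower_pos|].
  intros w Hw. destruct (Req_dec w 0) as [->|Hne]; [rewrite powa_0; auto|].
  rewrite powa_nonzero by auto.
  replace eps with (Rpower (Rpower eps (/ q)) q).
  - apply Rlt_Rpower_l; auto. split; auto. apply Rabs_pos_lt; auto.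
  - rewrite Rpower_mult. replace (/ q * q) with 1 by (field; lra). apply Rpower_1; auto.
Qed.

Lemma powa_continuity_pt q x : 0 < q -> continuity_pt (fun y => powa y q) x.
Proof.
  intros Hq. destruct (Req_dec x 0) as [->|H].
  - apply continuity_pt_eps. intros eps He.
    destruct (powa_small q eps Hq He) as [d [Hd H]]. exists d. split; auto.
    intros w Hw. rewrite powa_0, Rminus_0_r, Rabs_pos_eq by apply powa_ge0.
    rewrite Rminus_0_r in Hw. auto.
  - apply derivable_continuous_pt. eexists. apply powa_deriv_nonzero, H.
Qed.

(* [x |x|^(q-2)], the derivative of [|x|^q] divided by [q] *)
Definition spow (q x : R) : R := x * powa x (q - 2).

Lemma powa_deriv q x : 1 < q -> derivable_pt_lim (fun y => powa y q) x (q * spow q x).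
Proof.
  intros Hq. unfold spow. destruct (Req_dec x 0) as [->|H].
  - rewrite Rmult_0_l, Rmult_0_r. intros eps He.
    destruct (powa_small (q - 1) eps ltac:(lra) He) as [d [Hd Hs]].
    exists (mkposreal d Hd). intros h Hh0 Hh. simpl in Hh.
    rewrite Rplus_0_l, powa_0, !Rminus_0_r, powa_nonzero by auto.
    assert (A : 0 < Rabs h) by (apply Rabs_pos_lt; auto).
    specialize (Hs h Hh). rewrite powa_nonzero in Hs by auto.
    unfold Rdiv.
    rewrite Rabs_mult, Rabs_inv, (Rabs_pos_eq (Rpower _ _)) by (left; apply Rpower_pos).
    replace (Rpower (Rabs h) q * / Rabs h) with (Rpower (Rabs h) (q - 1)); auto.
    replace q with ((q - 1) + 1) at 2 by ring. rewrite Rpower_plus, Rpower_1 by auto. field. lra.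
  - rewrite <- Rmult_assoc. apply powa_deriv_nonzero, H.
Qed.

Lemma spow_abs q x : Rabs (spow q x) = powa x (q - 1).
Proof.
  unfold spow. destruct (Req_dec x 0) as [->|H].
  - rewrite !powa_0, Rmult_0_l, Rabs_R0; auto.
  - rewrite !powa_nonzero by auto. assert (A : 0 < Rabs x) by (apply Rabs_pos_lt; auto).
    rewrite Rabs_mult, (Rabs_pos_eq (Rpower _ _)) by (left; apply Rpower_pos).
    replace (q - 1) with (1 + (q - 2)) by ring. rewrite Rpower_plus, Rpower_1; auto.
Qed.

Lemma spow_mul q x : spow q x * x = powa x q.
Proof.
  unfold spow. destruct (Req_dec x 0) as [->|H]; [rewrite !powa_0; ring|].
  rewrite !powa_nonzero by auto. assert (A : 0 < Rabs x) by (apply Rabs_pos_lt; auto).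
  replace (x * Rpower (Rabs x) (q - 2) * x) with (Rabs x * Rabs x * Rpower (Rabs x) (q - 2))
    by (unfold Rabs; destruct (Rcase_abs x); ring).
  replace q with (1 + (1 + (q - 2))) at 2 by ring. rewrite !Rpower_plus, Rpower_1; auto. ring.
Qed.

Lemma spow_continuity_pt q x : 1 < q -> continuity_pt (spow q) x.
Proof.
  intros Hq. destruct (Req_dec x 0) as [->|H].
  - apply continuity_pt_eps. intros eps He.
    destruct (powa_small (q - 1) eps ltac:(lra) He) as [d [Hd Hs]].
    exists d. split; auto. intros w Hw. unfold spow at 2.
    rewrite Rmult_0_l, Rminus_0_r, spow_abs. rewrite Rminus_0_r in Hw. auto.
  - apply derivable_continuous_pt. eexists. unfold spow.
    apply (derivable_pt_lim_mult id (fun y => powa y (q - 2))).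
    + apply derivable_pt_lim_id.
    + apply powa_deriv_nonzero, H.
Qed.

Lemma distN_hyperplane N nu d x : sumN N (fun k => nu k ^ 2) = 1 ->
  distN N x (hyperplane N nu d) = Rabs (dotN N x nu - d).
Proof.
  intros Hnu. set (t := dotN N x nu - d).
  assert (Hglb : is_glb (fun r => exists eta, hyperplane N nu d eta /\ r = eucl_dist N x eta)
                        (Rabs t)).
  { split.
    - intros r [eta [Heta ->]]. unfold eucl_dist. rewrite <- sqrt_Rsqr_abs. apply sqrt_le_1_alt.
      assert (Es : sumN N (fun k => (x k - eta k) * nu k) = t).
      { unfold t, dotN. unfold hyperplane, dotN in Heta. rewrite <- Heta.
        rewrite (sumN_ext N _ (fun k => x k * nu k + -1 * (eta k * nu k))) by (intros; ring).
        rewrite sumN_plus, sumN_scal. ring. }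
      (* expand [sum_k (x k - eta k - t nu k)^2 >= 0], with [t] the normal component of [x - eta] *)
      assert (Q : 0 <= sumN N (fun k => (x k - eta k - t * nu k) ^ 2))
        by (apply sumN_nonneg; intros; apply pow2_ge_0).
      rewrite (sumN_ext N _ (fun k => (x k - eta k) ^ 2 + (-2 * t * ((x k - eta k) * nu k)
                                       + t * t * nu k ^ 2))) in Q by (intros; ring).
      rewrite !sumN_plus, !sumN_scal, Es, Hnu in Q. unfold Rsqr. lra.
    - intros b Hb. apply Hb. exists (fun k => x k - t * nu k). split.
      + unfold hyperplane, dotN.
        rewrite (sumN_ext N _ (fun k => x k * nu k + - t * nu k ^ 2)) by (intros; ring).
        rewrite sumN_plus, sumN_scal, Hnu. unfold t, dotN. ring.
      + unfold eucl_dist.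
        rewrite (sumN_ext N _ (fun k => t * t * nu k ^ 2)), sumN_scal, Hnu, Rmult_1_r
          by (intros; ring).
        symmetry. apply sqrt_Rsqr_abs. }
  unfold distN, Rinf. destruct (excluded_middle_informative _) as [H|H].
  - destruct (constructive_indefinite_description _ _) as [m [Hm1 Hm2]]. simpl.
    destruct Hglb as [G1 G2]. apply Rle_antisym; auto.
  - exfalso. eauto.
Qed.

Lemma exp_convex x y th : 0 <= th <= 1 ->
  exp (th * x + (1 - th) * y) <= th * exp x + (1 - th) * exp y.
Proof.
  intros Hth. set (z := th * x + (1 - th) * y).
  assert (Htangent : forall w, exp z * (1 + (w - z)) <= exp w).
  { intros w. replace (exp w) with (exp z * exp (w - z)) by (rewrite <- exp_plus; f_equal; ring).
    apply Rmult_le_compat_l; [left; apply exp_pos|apply exp_ineq1_le]. }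
  pose proof (Htangent x). pose proof (Htangent y).
  assert (exp z = th * (exp z * (1 + (x - z))) + (1 - th) * (exp z * (1 + (y - z))))
    by (unfold z; ring).
  nra.
Qed.

Lemma Rpower_weighted_am_gm X Y th : 0 < X -> 0 < Y -> 0 <= th <= 1 ->
  Rpower X th * Rpower Y (1 - th) <= th * X + (1 - th) * Y.
Proof.
  intros HX HY Hth. unfold Rpower. rewrite <- exp_plus.
  rewrite <- (exp_ln X) at 2 by auto. rewrite <- (exp_ln Y) at 2 by auto.
  apply exp_convex, Hth.
Qed.

Lemma young_param p lam w v : 1 < p -> 0 < lam -> 0 < w -> 0 < v ->
  Rpower w (p - 1) * v <= (p - 1) / p * lam * Rpower w p
                          + 1 / p * Rpower lam (1 - p) * Rpower v p.
Proof.
  intros Hp Hlam Hw Hv. set (th := (p - 1) / p).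
  assert (Hth : 0 <= th <= 1).
  { unfold th. split; [left; apply Rdiv_lt_0_compat; lra|].
    apply Rmult_le_reg_r with p; [lra|]. unfold Rdiv. rewrite Rmult_assoc, Rinv_l by lra. lra. }
  pose proof (Rpower_weighted_am_gm (lam * Rpower w p) (Rpower lam (1 - p) * Rpower v p) th
     ltac:(apply Rmult_lt_0_compat; auto; apply Rpower_pos)
     ltac:(apply Rmult_lt_0_compat; apply Rpower_pos) Hth) as Y.
  rewrite <- !Rpower_mult_distr, !Rpower_mult in Y by (auto; apply Rpower_pos).
  replace (p * th) with (p - 1) in Y by (unfold th; field; lra).
  replace ((1 - p) * (1 - th)) with (- th) in Y by (unfold th; field; lra).
  replace (p * (1 - th)) with 1 in Y by (unfold th; field; lra).
  rewrite Rpower_1 in Y by auto.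
  replace (Rpower lam th * Rpower w (p - 1) * (Rpower lam (- th) * v)) with
    (Rpower lam (th + - th) * Rpower w (p - 1) * v) in Y by (rewrite Rpower_plus; ring).
  rewrite Rplus_opp_r, Rpower_O in Y by auto.
  replace (1 - th) with (1 / p) in Y by (unfold th; field; lra).
  unfold th in *. lra.
Qed.

(* The identity is the integrated divergence identity, the inequality Young's. *)
Lemma hardy_absorb p IL IR IJ : 1 < p -> (1 - p) * IL + p * IJ = 0 ->
  IJ <= (p - 1) / p * ((p - 1) / p) * IL + 1 / p * Rpower ((p - 1) / p) (1 - p) * IR ->
  Rpower ((p - 1) / p) p * IL <= IR.
Proof.
  intros Hp Hdiv Hyoung. set (mu := (p - 1) / p) in *.
  assert (Hmu : 0 < mu) by (unfold mu; apply Rdiv_lt_0_compat; lra).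
  assert (EJ : IJ = mu * IL) by (unfold mu; apply Rmult_eq_reg_l with p; [field_simplify|]; lra).
  rewrite EJ in Hyoung.
  assert (A : mu * IL <= Rpower mu (1 - p) * IR).
  { assert (B : mu * (1 / p) * IL <= 1 / p * Rpower mu (1 - p) * IR)
      by (replace (mu * (1 / p) * IL) with (mu * IL - mu * mu * IL) by (unfold mu; field; lra);
          lra).
    apply Rmult_le_reg_l with (1 / p); [apply Rdiv_lt_0_compat|]; lra. }
  apply Rmult_le_compat_l with (r := Rpower mu (p - 1)) in A; [|left; apply Rpower_pos].
  rewrite <- (Rmult_assoc (Rpower mu (p - 1)) (Rpower mu (1 - p)) IR), <- Rpower_plus in A.
  replace (p - 1 + (1 - p)) with 0 in A by ring.
  rewrite Rpower_O in A by auto.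
  replace (Rpower mu p) with (Rpower mu (p - 1) * mu); [lra|].
  replace p with ((p - 1) + 1) at 2 by ring. rewrite Rpower_plus, Rpower_1; auto.
Qed.

Lemma Rpower_mult_div A B D q : 0 < A -> 0 < B -> 0 < D ->
  Rpower (A * B * / D) q = Rpower A q * Rpower B q * Rpower D (- q).
Proof.
  intros HA HB HD.
  rewrite <- !Rpower_mult_distr by (auto using Rmult_lt_0_compat, Rinv_0_lt_compat).
  replace (Rpower (/ D) q) with (Rpower D (- q)); [reflexivity|].
  unfold Rpower. rewrite ln_Rinv by auto. f_equal. ring.
Qed.

(** * The Hardy inequality for [V = d/dx_j1 + kap x_m0 d/dx_j2] *)

Section HardyAlongField.

Variables (N : nat) (nu : nat -> R) (d p kap : R) (j1 j2 m0 : nat).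
Variables (u : (nat -> R) -> R) (R0 c : R).

Hypothesis Hp : 1 < p.
Hypotheses (Hj12 : j1 <> j2) (Hm1 : m0 <> j1) (Hm2 : m0 <> j2).
Hypotheses (Hj1 : (j1 < N)%nat) (Hj2 : (j2 < N)%nat) (Hm0 : (m0 < N)%nat).
Hypothesis Hu : CkN 1 N u.
Hypotheses (HR0 : 0 <= R0) (Hsupp : supp_bounded N R0 u).

Definition delta (x : nat -> R) : R := dotN N x nu - d.

Hypotheses (Hc : 0 < c) (Hsep : forall x, u x <> 0 -> c <= delta x).

Definition normal_comp (x : nat -> R) : R := nu j1 + kap * x m0 * nu j2.
Definition Vu (x : nat -> R) : R := pd j1 u x + kap * x m0 * pd j2 u x.

(* [delta ^ q], cut off where [delta <= c / 2]; the cut-off is invisible on the support of [u] *)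
Definition delta_pow (q : R) (x : nat -> R) : R :=
  if Rlt_dec (c / 2) (delta x) then Rpower (delta x) q else 0.

Definition hardy_lhs (x : nat -> R) : R :=
  powa (normal_comp x) p * delta_pow (- p) x * powa (u x) p.
Definition hardy_rhs (x : nat -> R) : R := powa (Vu x) p.
Definition hardy_cross (x : nat -> R) : R :=
  spow p (normal_comp x) * delta_pow (1 - p) x * spow p (u x) * Vu x.
Definition flux (x : nat -> R) : R :=
  spow p (normal_comp x) * delta_pow (1 - p) x * powa (u x) p.
Definition dflux (k : nat) (x : nat -> R) : R :=
  spow p (normal_comp x) * ((1 - p) * nu k * delta_pow (- p) x * powa (u x) p
                            + p * delta_pow (1 - p) x * spow p (u x) * pd k u x).

Lemma u_cont x : contN_at N u x.
Proof. exact (proj1 Hu x). Qed.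

Lemma pd_u_spec k x : (k < N)%nat -> pder k u x (pd k u x).
Proof. intros Hk. apply pder_pd, (proj2 Hu k Hk). Qed.

Lemma pd_u_cont k x : (k < N)%nat -> contN_at N (pd k u) x.
Proof. intros Hk. exact (proj1 (proj2 (proj2 Hu k Hk)) x). Qed.

Lemma delta_upd x k t : (k < N)%nat -> delta (upd x k t) = delta x + (t - x k) * nu k.
Proof.
  intros Hk. unfold delta, dotN.
  assert (E : forall M, (k < M)%nat -> sumN M (fun j => upd x k t j * nu j) =
                                      sumN M (fun j => x j * nu j) + (t - x k) * nu k).
  { induction M as [|M IH]; intros HM; simpl; [lia|].
    destruct (Nat.eq_dec k M) as [->|Hne].
    - rewrite upd_same, (sumN_ext M _ (fun j => x j * nu j)); [ring|].
      intros j Hj. rewrite upd_other by lia. auto.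
    - rewrite IH, upd_other by lia. ring. }
  rewrite E by auto. ring.
Qed.

Lemma delta_cont x : contN_at N delta x.
Proof.
  unfold delta, Rminus. apply contN_at_plus; [apply contN_at_dot|apply contN_at_const].
Qed.

Lemma u_zero_near x : delta x < c -> exists r, 0 < r /\ forall y, closeN N x y r -> u y = 0.
Proof.
  intros Hx. destruct (delta_cont x (c - delta x) ltac:(lra)) as [r [Hr H]].
  exists r. split; auto. intros y Hy. apply NNPP. intros E. pose proof (Hsep y E).
  specialize (H y Hy). apply Rabs_def2 in H. lra.
Qed.

Lemma pd_u_zero k x : (k < N)%nat -> delta x < c -> pd k u x = 0.
Proof.
  intros Hk Hx. apply pd_locally_zero. destruct (u_zero_near x Hx) as [r [Hr H]].
  exists r. split; auto. intros t Ht. apply H, closeN_upd_self; auto.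
Qed.

Lemma unif_contN_of_vanishing g : (forall y, u y = 0 -> g y = 0) ->
  (forall x, c / 2 < delta x -> contN_at N g x) -> unif_contN N g.
Proof.
  intros Hg Hcont. apply (unif_contN_of_supp_bounded N R0).
  - intros x. destruct (Rlt_dec (c / 2) (delta x)) as [Hx|Hx]; [apply Hcont, Hx|].
    apply (contN_at_local N g (fun _ => 0)); [|apply contN_at_const].
    apply Rnot_lt_le in Hx. destruct (u_zero_near x ltac:(lra)) as [r [Hr H]].
    exists r. split; auto.
  - intros x Hx. apply Hsupp. intros E. apply Hx, Hg, E.
Qed.

Lemma normal_comp_cont x : contN_at N normal_comp x.
Proof.
  unfold normal_comp. apply contN_at_plus; [apply contN_at_const|].
  apply contN_at_mult; [apply contN_at_mult|apply contN_at_const].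
  - apply contN_at_const.
  - apply contN_at_coord, Hm0.
Qed.

Lemma Vu_cont x : contN_at N Vu x.
Proof.
  unfold Vu. apply contN_at_plus; [apply pd_u_cont, Hj1|].
  apply contN_at_mult; [apply contN_at_mult|apply pd_u_cont, Hj2].
  - apply contN_at_const.
  - apply contN_at_coord, Hm0.
Qed.

Lemma delta_pow_cont q x : c / 2 < delta x -> contN_at N (delta_pow q) x.
Proof.
  intros Hx. apply (contN_at_local N (delta_pow q) (fun y => Rpower (delta y) q)).
  - destruct (delta_cont x (delta x - c / 2) ltac:(lra)) as [r [Hr H]]. exists r. split; auto.
    intros y Hy. specialize (H y Hy). apply Rabs_def2 in H. unfold delta_pow.
    destruct (Rlt_dec (c / 2) (delta y)); [auto|lra].
  - apply (contN_at_comp N delta (fun z => Rpower z q)); [apply delta_cont|].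
    apply derivable_continuous_pt. eexists. apply derivable_pt_lim_power. lra.
Qed.

Lemma powa_comp_cont f x : contN_at N f x -> contN_at N (fun y => powa (f y) p) x.
Proof.
  intros Hf. apply (contN_at_comp N f (fun z => powa z p)); auto. apply powa_continuity_pt. lra.
Qed.

Lemma spow_comp_cont f x : contN_at N f x -> contN_at N (fun y => spow p (f y)) x.
Proof. intros Hf. apply (contN_at_comp N f (spow p)); auto. apply spow_continuity_pt, Hp. Qed.

Ltac contN_at_auto :=
  repeat first
    [ apply normal_comp_cont | apply Vu_cont | apply u_cont | apply pd_u_cont; assumption
    | apply delta_pow_cont; assumption | apply powa_comp_cont | apply spow_comp_cont
    | apply contN_at_const | apply contN_at_coord; assumption
    | apply contN_at_mult | apply contN_at_plus ].

Lemma spow_0 q : spow q 0 = 0.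
Proof. unfold spow. ring. Qed.

Lemma hardy_lhs_unif_cont : unif_contN N hardy_lhs.
Proof.
  apply unif_contN_of_vanishing; unfold hardy_lhs.
  - intros y Hy. rewrite Hy, powa_0. ring.
  - intros x Hx. contN_at_auto.
Qed.

Lemma hardy_cross_unif_cont : unif_contN N hardy_cross.
Proof.
  apply unif_contN_of_vanishing; unfold hardy_cross.
  - intros y Hy. rewrite Hy, spow_0. ring.
  - intros x Hx. contN_at_auto.
Qed.

Lemma flux_unif_cont : unif_contN N flux.
Proof.
  apply unif_contN_of_vanishing; unfold flux.
  - intros y Hy. rewrite Hy, powa_0. ring.
  - intros x Hx. contN_at_auto.
Qed.

Lemma flux2_unif_cont : unif_contN N (fun x => kap * x m0 * flux x).
Proof.
  apply unif_contN_of_vanishing; unfold flux.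
  - intros y Hy. rewrite Hy, powa_0. ring.
  - intros x Hx. contN_at_auto.
Qed.

Lemma dflux_unif_cont k : (k < N)%nat -> unif_contN N (fun x => kap * x m0 * dflux k x).
Proof.
  intros Hk. apply unif_contN_of_vanishing; unfold dflux.
  - intros y Hy. rewrite Hy, powa_0, spow_0. ring.
  - intros x Hx. contN_at_auto.
Qed.

Lemma dflux1_unif_cont : unif_contN N (dflux j1).
Proof.
  apply unif_contN_of_vanishing; unfold dflux.
  - intros y Hy. rewrite Hy, powa_0, spow_0. ring.
  - intros x Hx. contN_at_auto.
Qed.

Lemma hardy_rhs_supp : supp_bounded N R0 hardy_rhs.
Proof.
  intros x Hx. unfold hardy_rhs, Vu in Hx.
  destruct (Req_dec (pd j1 u x) 0) as [E1|E1]; [destruct (Req_dec (pd j2 u x) 0) as [E2|E2]|].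
  - exfalso. apply Hx. rewrite E1, E2, Rmult_0_r, Rplus_0_r. apply powa_0.
  - exact (supp_bounded_pd N R0 j2 u Hj2 Hsupp x E2).
  - exact (supp_bounded_pd N R0 j1 u Hj1 Hsupp x E1).
Qed.

Lemma hardy_rhs_unif_cont : unif_contN N hardy_rhs.
Proof.
  apply (unif_contN_of_supp_bounded N R0); [|exact hardy_rhs_supp].
  intros x. unfold hardy_rhs. contN_at_auto.
Qed.

Lemma delta_pder k x : (k < N)%nat -> pder k delta x (nu k).
Proof.
  intros Hk. unfold pder.
  rewrite (functional_extensionality (fun t => delta (upd x k t))
             (fun t => delta x + (t - x k) * nu k)) by (intros; apply delta_upd, Hk).
  apply is_derive_Reals. auto_derive; auto. ring.
Qed.

Lemma delta_pow_pder q k x : (k < N)%nat -> c / 2 < delta x ->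
  pder k (delta_pow q) x (q * nu k * delta_pow (q - 1) x).
Proof.
  intros Hk Hx. apply (pder_local k _ (fun y => Rpower (delta y) q)).
  - destruct (delta_cont x (delta x - c / 2) ltac:(lra)) as [r [Hr H]]. exists r. split; auto.
    intros t Ht. specialize (H _ (closeN_upd_self N x k t r Hr Ht)). apply Rabs_def2 in H.
    unfold delta_pow. destruct (Rlt_dec (c / 2) (delta (upd x k t))); [auto|lra].
  - replace (q * nu k * delta_pow (q - 1) x) with (q * Rpower (delta x) (q - 1) * nu k).
    + apply (pder_comp k delta (fun z => Rpower z q)); [apply delta_pder, Hk|].
      apply derivable_pt_lim_power. lra.
    + unfold delta_pow. destruct (Rlt_dec (c / 2) (delta x)); [ring|lra].
Qed.

Lemma flux_pder k x : (k < N)%nat -> k <> m0 -> pder k flux x (dflux k x).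
Proof.
  intros Hk Hkm. destruct (Rlt_dec (c / 2) (delta x)) as [Hx|Hx].
  - assert (Hfa : pder k (fun y => spow p (normal_comp y)) x 0).
    { apply pder_const_along. intros t. unfold normal_comp. rewrite upd_other; auto. }
    assert (Hpu : pder k (fun y => powa (u y) p) x (p * spow p (u x) * pd k u x)).
    { apply (pder_comp k u (fun z => powa z p)); [apply pd_u_spec, Hk|]. apply powa_deriv, Hp. }
    pose proof (pder_mult k _ _ x _ _
                  (pder_mult k _ _ x _ _ Hfa (delta_pow_pder (1 - p) k x Hk Hx)) Hpu) as H.
    replace (dflux k x) with
      ((0 * delta_pow (1 - p) x
        + spow p (normal_comp x) * ((1 - p) * nu k * delta_pow (1 - p - 1) x)) * powa (u x) p
       + spow p (normal_comp x) * delta_pow (1 - p) x * (p * spow p (u x) * pd k u x)); [exact H|].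
    unfold dflux. replace (1 - p - 1) with (- p) by ring. ring.
  - apply Rnot_lt_le in Hx. destruct (u_zero_near x ltac:(lra)) as [r [Hr H]].
    replace (dflux k x) with 0.
    + apply (pder_local k _ (fun _ => 0)); [|apply pder_const_along; auto].
      exists r. split; auto. intros t Ht. unfold flux.
      rewrite H by (apply closeN_upd_self; auto). rewrite powa_0. ring.
    + unfold dflux. rewrite H by (apply closeN_refl; auto). rewrite powa_0, spow_0. ring.
Qed.

Lemma flux2_pder x : pder j2 (fun y => kap * y m0 * flux y) x (kap * x m0 * dflux j2 x).
Proof.
  replace (kap * x m0 * dflux j2 x) with (0 * flux x + kap * x m0 * dflux j2 x) by ring.
  apply pder_mult; [|apply flux_pder; auto].
  apply pder_const_along. intros t. rewrite upd_other; auto.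
Qed.

Lemma dflux_divergence x :
  dflux j1 x + kap * x m0 * dflux j2 x = (1 - p) * hardy_lhs x + p * hardy_cross x.
Proof.
  unfold dflux, hardy_lhs, hardy_cross, Vu. rewrite <- (spow_mul p (normal_comp x)).
  unfold normal_comp. ring.
Qed.

Lemma intCube_divergence M : R0 < M ->
  (1 - p) * intCube N M hardy_lhs + p * intCube N M hardy_cross = 0.
Proof.
  intros HM.
  assert (Hfar : forall k x s, (k < N)%nat -> Rabs s = M -> flux (upd x k s) = 0).
  { intros k x s Hk Hs. unfold flux. replace (u (upd x k s)) with 0; [rewrite powa_0; ring|].
    symmetry. apply NNPP. intros E. specialize (Hsupp _ E k Hk). rewrite upd_same in Hsupp. lra. }
  assert (HabsM : Rabs M = M) by (apply Rabs_pos_eq; lra).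
  assert (HabsM' : Rabs (- M) = M) by (rewrite Rabs_Ropp; auto).
  assert (Hd1 : pd j1 flux = dflux j1)
    by (apply functional_extensionality; intro x; apply pd_eq, flux_pder; auto).
  assert (Hd2 : pd j2 (fun y => kap * y m0 * flux y) = (fun x => kap * x m0 * dflux j2 x))
    by (apply functional_extensionality; intro x; apply pd_eq, flux2_pder).
  assert (Z1 : intCube N M (dflux j1) = 0).
  { rewrite <- Hd1. apply (intCube_pd_vanish N); try lra; auto.
    - apply flux_unif_cont.
    - rewrite Hd1. apply dflux1_unif_cont.
    - intros x. rewrite Hd1. apply flux_pder; auto. }
  assert (Z2 : intCube N M (fun x => kap * x m0 * dflux j2 x) = 0).
  { rewrite <- Hd2. apply (intCube_pd_vanish N); try lra; auto.
    - apply flux2_unif_cont.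
    - rewrite Hd2. apply dflux_unif_cont, Hj2.
    - intros x. rewrite Hd2. apply flux2_pder.
    - intros x. rewrite Hfar; auto. ring.
    - intros x. rewrite Hfar; auto. ring. }
  rewrite <- (intCube_lincomb N); [|lra|apply hardy_lhs_unif_cont|apply hardy_cross_unif_cont].
  replace (fun x => (1 - p) * hardy_lhs x + p * hardy_cross x) with
    (fun x => 1 * dflux j1 x + 1 * (kap * x m0 * dflux j2 x))
    by (apply functional_extensionality; intro x; rewrite <- dflux_divergence; ring).
  rewrite (intCube_lincomb N), Z1, Z2; [ring|lra|apply dflux1_unif_cont|apply dflux_unif_cont, Hj2].
Qed.

Lemma delta_pow_ge0 q x : 0 <= delta_pow q x.
Proof. unfold delta_pow. destruct (Rlt_dec _ _); [left; apply Rpower_pos|lra]. Qed.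

Lemma hardy_lhs_ge0 x : 0 <= hardy_lhs x.
Proof. unfold hardy_lhs. repeat apply Rmult_le_pos; auto using powa_ge0, delta_pow_ge0. Qed.

Lemma hardy_cross_young x :
  Rabs (hardy_cross x) <=
  (p - 1) / p * ((p - 1) / p) * hardy_lhs x + 1 / p * Rpower ((p - 1) / p) (1 - p) * hardy_rhs x.
Proof.
  set (mu := (p - 1) / p). assert (Hmu : 0 < mu) by (apply Rdiv_lt_0_compat; lra).
  destruct (Req_dec (hardy_cross x) 0) as [E|E].
  { rewrite E, Rabs_R0. pose proof (hardy_lhs_ge0 x). pose proof (powa_ge0 (Vu x) p).
    pose proof (Rpower_pos mu (1 - p)). assert (0 < 1 / p) by (apply Rdiv_lt_0_compat; lra).
    unfold hardy_rhs. apply Rplus_le_le_0_compat; apply Rmult_le_pos; auto.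
    - apply Rmult_le_pos; lra.
    - apply Rmult_le_pos; lra. }
  assert (Hx : c / 2 < delta x).
  { apply NNPP. intros Hx. apply E. unfold hardy_cross, delta_pow.
    destruct (Rlt_dec _ _); [contradiction|ring]. }
  assert (Ea : normal_comp x <> 0)
    by (intros Ea; apply E; unfold hardy_cross; rewrite Ea, spow_0; ring).
  assert (Eu : u x <> 0) by (intros Eu; apply E; unfold hardy_cross; rewrite Eu, spow_0; ring).
  assert (Ev : Vu x <> 0) by (intros Ev; apply E; unfold hardy_cross; rewrite Ev; ring).
  pose proof (Rabs_pos_lt _ Ea) as Ha. pose proof (Rabs_pos_lt _ Eu) as Hu'.
  pose proof (Rabs_pos_lt _ Ev) as Hv.
  assert (Hd : 0 < delta x) by lra.
  set (w := Rabs (normal_comp x) * Rabs (u x) * / delta x).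
  assert (Hw : 0 < w)
    by (unfold w; repeat apply Rmult_lt_0_compat; auto; apply Rinv_0_lt_compat, Hd).
  replace (Rabs (hardy_cross x)) with (Rpower w (p - 1) * Rabs (Vu x)).
  2:{ unfold hardy_cross, delta_pow, w. destruct (Rlt_dec _ _); [|contradiction].
      rewrite !Rabs_mult, !spow_abs, !powa_nonzero, Rpower_mult_div
        by auto.
      rewrite (Rabs_pos_eq (Rpower _ _)) by (left; apply Rpower_pos).
      replace (1 - p) with (- (p - 1)) by ring. ring. }
  replace (hardy_lhs x) with (Rpower w p).
  2:{ unfold hardy_lhs, delta_pow, w. destruct (Rlt_dec _ _); [|contradiction].
      rewrite !powa_nonzero, Rpower_mult_div by auto. ring. }
  replace (hardy_rhs x) with (Rpower (Rabs (Vu x)) p)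
    by (unfold hardy_rhs; rewrite powa_nonzero; auto).
  apply young_param; auto.
Qed.

Lemma hardy_cube M : R0 < M ->
  Rpower ((p - 1) / p) p * intCube N M hardy_lhs <= intCube N M hardy_rhs.
Proof.
  intros HM. apply (hardy_absorb p _ _ (intCube N M hardy_cross) Hp (intCube_divergence M HM)).
  assert (HM0 : 0 <= M) by lra.
  pose proof hardy_lhs_unif_cont. pose proof hardy_cross_unif_cont. pose proof hardy_rhs_unif_cont.
  rewrite <- (intCube_lincomb N) by auto.
  apply Rle_trans with (intCube N M (fun x => Rabs (hardy_cross x))).
  - apply (intCube_le N); auto using unif_contN_abs. intros x. apply Rle_abs.
  - apply (intCube_le N); auto using unif_contN_abs, unif_contN_lin. apply hardy_cross_young.
Qed.

Variable V : (nat -> R) -> nat -> R.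
Hypothesis HV : forall x k,
  V x k = if Nat.eq_dec k j1 then 1 else if Nat.eq_dec k j2 then kap * x m0 else 0.
Hypothesis Hnu : sumN N (fun k => nu k ^ 2) = 1.

Lemma dotN_V x : dotN N (V x) nu = normal_comp x.
Proof.
  unfold dotN, normal_comp. rewrite (sumN_ext N _ (fun k => (if Nat.eq_dec k j1 then 1 else
    if Nat.eq_dec k j2 then kap * x m0 else 0) * nu k)) by (intros; rewrite HV; auto).
  rewrite sumN_two_terms by auto. ring.
Qed.

Lemma vf_apply_V x : vf_apply N V u x = Vu x.
Proof.
  unfold vf_apply, Vu. rewrite (sumN_ext N _ (fun k => (if Nat.eq_dec k j1 then 1 else
    if Nat.eq_dec k j2 then kap * x m0 else 0) * pd k u x)) by (intros; rewrite HV; auto).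
  rewrite sumN_two_terms by auto. ring.
Qed.

Lemma integral_on_weighted :
  integral_on N (halfspace N nu d)
    (fun xi => powa (dotN N (V xi) nu) p / powa (distN N xi (hyperplane N nu d)) p * powa (u xi) p)
  = intCube N (R0 + 1) hardy_lhs.
Proof.
  unfold integral_on.
  rewrite <- (integralRN_intCube N R0 (R0 + 1) hardy_lhs HR0 ltac:(lra) hardy_lhs_unif_cont).
  - f_equal. apply functional_extensionality; intro x.
    destruct (Req_dec (u x) 0) as [Eu|Eu].
    { unfold hardy_lhs. rewrite Eu, powa_0. destruct (excluded_middle_informative _); ring. }
    pose proof (Hsep x Eu) as Hcx.
    destruct (excluded_middle_informative _) as [_|Hn]; [|unfold halfspace, delta in *; lra].
    rewrite dotN_V, distN_hyperplane by auto. fold (delta x).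
    rewrite Rabs_pos_eq, (powa_nonzero (delta x)), Rabs_pos_eq by lra.
    unfold hardy_lhs, delta_pow. destruct (Rlt_dec (c / 2) (delta x)); [|lra].
    rewrite Rpower_Ropp. field. apply Rgt_not_eq, Rpower_pos.
  - intros x Hx. apply Hsupp. intros E. apply Hx. unfold hardy_lhs. rewrite E, powa_0. ring.
Qed.

Lemma integral_on_field :
  integral_on N (halfspace N nu d) (fun xi => powa (vf_apply N V u xi) p)
  = intCube N (R0 + 1) hardy_rhs.
Proof.
  unfold integral_on.
  rewrite <- (integralRN_intCube N R0 (R0 + 1) hardy_rhs HR0 ltac:(lra) hardy_rhs_unif_cont
                                   hardy_rhs_supp).
  f_equal. apply functional_extensionality; intro x. rewrite vf_apply_V.
  destruct (excluded_middle_informative _) as [_|Hn]; auto.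
  unfold halfspace in Hn. assert (delta x < c) by (unfold delta; lra).
  unfold hardy_rhs, Vu. rewrite !pd_u_zero by auto. rewrite Rmult_0_r, Rplus_0_r.
  symmetry. apply powa_0.
Qed.

Lemma hardy_along_field :
  Rpower ((p - 1) / p) p *
    integral_on N (halfspace N nu d)
      (fun xi => powa (dotN N (V xi) nu) p / powa (distN N xi (hyperplane N nu d)) p
                 * powa (u xi) p)
  <= integral_on N (halfspace N nu d) (fun xi => powa (vf_apply N V u xi) p).
Proof. rewrite integral_on_weighted, integral_on_field. apply hardy_cube. lra. Qed.

End HardyAlongField.

Lemma hardy_vector_field N nu d p kap j1 j2 m0 u V :
  (forall x k, V x k = if Nat.eq_dec k j1 then 1 else if Nat.eq_dec k j2 then kap * x m0 else 0) ->
  sumN N (fun k => nu k ^ 2) = 1 -> 1 < p -> j1 <> j2 -> m0 <> j1 -> m0 <> j2 ->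
  (j1 < N)%nat -> (j2 < N)%nat -> (m0 < N)%nat ->
  smoothN N u -> compact_support_in N u (halfspace N nu d) ->
  Rpower ((p - 1) / p) p *
    integral_on N (halfspace N nu d)
      (fun xi => powa (dotN N (V xi) nu) p / powa (distN N xi (hyperplane N nu d)) p
                 * powa (u xi) p)
  <= integral_on N (halfspace N nu d) (fun xi => powa (vf_apply N V u xi) p).
Proof.
  intros HV Hnu Hp Hj12 Hm1 Hm2 Hj1 Hj2 Hm0 Hsmooth [K [HKc [[R1 HR1] [HKH HuK]]]].
  assert (Hsupp : supp_bounded N (Rabs R1) u).
  { intros x Hx k Hk. pose proof (HR1 x (HuK x Hx) k Hk). pose proof (Rle_abs R1). lra. }
  destruct (contN_pos_lower_bound N K (delta N nu d)) as [c [Hc HcK]].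
  - intros x. apply delta_cont.
  - exact HKc.
  - exists R1. exact HR1.
  - intros x Kx. specialize (HKH x Kx). unfold halfspace in HKH. unfold delta. lra.
  - eapply (hardy_along_field N nu d p kap j1 j2 m0 u (Rabs R1) c); eauto using Rabs_pos.
Qed.

Theorem mainTheorem5 (n : nat) (nu : nat -> R) (d p : R) (i : nat)
  (u : (nat -> R) -> R) :
  sumN (2 * n + 1) (fun k => nu k ^ 2) = 1 ->
  1 < p ->
  (1 <= i <= n)%nat ->
  depends_only (2 * n + 1) u ->
  smoothN (2 * n + 1) u ->
  compact_support_in (2 * n + 1) u (halfspace (2 * n + 1) nu d) ->
  Rpower ((p - 1) / p) p *
    integral_on (2 * n + 1) (halfspace (2 * n + 1) nu d)
      (fun xi => powa (dotN (2 * n + 1) (Xvec n i xi) nu) p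
                 / powa (distN (2 * n + 1) xi (hyperplane (2 * n + 1) nu d)) p
                 * powa (u xi) p)
  <= integral_on (2 * n + 1) (halfspace (2 * n + 1) nu d)
       (fun xi => powa (vf_apply (2 * n + 1) (Xvec n i) u xi) p)
  /\
  Rpower ((p - 1) / p) p *
    integral_on (2 * n + 1) (halfspace (2 * n + 1) nu d)
      (fun xi => powa (dotN (2 * n + 1) (Yvec n i xi) nu) p
                 / powa (distN (2 * n + 1) xi (hyperplane (2 * n + 1) nu d)) p
                 * powa (u xi) p)
  <= integral_on (2 * n + 1) (halfspace (2 * n + 1) nu d)
       (fun xi => powa (vf_apply (2 * n + 1) (Yvec n i) u xi) p).
Proof.
  intros Hnu Hp Hi _ Hsmooth Hsupp. split.
  - (* X_i = d/dx_i + 2 y_i d/dt *)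
    apply (hardy_vector_field _ nu d p 2 (i - 1) (2 * n) (n + (i - 1))); auto; lia.
  - (* Y_i = d/dy_i - 2 x_i d/dt *)
    apply (hardy_vector_field _ nu d p (-2) (n + (i - 1)) (2 * n) (i - 1)); auto; lia.
Qed.
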